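(* Let $n,d,a,k$ be positive integers and suppose the triple $(n,d,a)$ is good. Then (1) $(n,d,ka)$ is good; (2) $(n,kd,ka)$ is good.
   Context: For positive integers $N,D,A$, let $R=\mathbb{C}[x_1,\dots,x_N]$ with $\mathfrak{S}_N$ permuting variables and $R_A^{\mathfrak{S}_N}$ the symmetric polynomials homogeneous of degree $A$. The triple $(N,D,A)$ is good if there exists $f\in R_A^{\mathfrak{S}_N}$ such that $x_1^D-x_N^D,\dots,x_{N-1}^D-x_N^D,f$ is a regular sequence (equivalently, $f$ has no zero on $\mathcal{V}_D=\{(z_1,\dots,z_N)\in\mathbb{C}^N: z_i^D=1\ \forall i,\ z_N=1\}$); otherwise it is bad. *)

From mathcomp Require Import all_boot all_order all_algebra.
From mathcomp Require Import reals.
From mathcomp.real_closed Require Import complex.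
From mathcomp.multinomials Require Import mpoly.

Set Implicit Arguments.
Unset Strict Implicit.
Unset Printing Implicit Defensive.

Import GRing.Theory.
Local Open Scope ring_scope.

(* The complex numbers are modelled as [complex R] = R[i] for a real field
   R : realType (every realType is the field of real numbers). *)

Definition in_ideal (P : comNzRingType) (gs : seq P) (g : P) : Prop :=
  exists hs : seq P, size hs = size gs /\
    g = \sum_(i < size gs) hs`_i * gs`_i.

Definition regular_seq (P : comNzRingType) (gs : seq P) : Prop :=
  (forall j : nat, (j < size gs)%N -> forall g : P,
      in_ideal (take j gs) (gs`_j * g) -> in_ideal (take j gs) g)
  /\ ~ in_ideal gs 1.

(* The sequence x_1^D - x_N^D, ..., x_{N-1}^D - x_N^D, f in C[x_1..x_N];
   the variables are indexed by 'I_(N.-1.+1) (= 'I_N for N > 0), x_N being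
   the variable of index ord_max. *)
Definition good_seq (R : realType) (N D : nat) (f : {mpoly R[i][N.-1.+1]})
  : seq {mpoly R[i][N.-1.+1]} :=
  rcons [seq 'X_(widen_ord (leqnSn N.-1) j) ^+ D - 'X_ord_max ^+ D
        | j <- enum 'I_N.-1] f.

Definition good (R : realType) (N D A : nat) : Prop :=
  exists f : {mpoly R[i][N.-1.+1]},
    [/\ f \is symmetric, f \is A.-homog & regular_seq (good_seq D f)].

(* (1) If f is a nonzerodivisor modulo the ideal of the x_i^d - x_N^d, then so
   is f^k, which is still symmetric and homogeneous, of degree ka.
   (2) Through the substitution x_i |-> x_i^k, C[x] is a free module over itself
   with basis the monomials x^e, 0 <= e_i < k, and the coordinate on x^0 sends 1
   to 1; this base change is faithfully flat, so it carries regular sequences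
   to regular sequences.  It maps x_i^d - x_N^d to x_i^(kd) - x_N^(kd) and f to
   the symmetric polynomial f(x^k), homogeneous of degree ka. *)

From HB Require Import structures.
From mathcomp Require Import all_boot all_order all_algebra perm.
From mathcomp Require Import reals.
From mathcomp.real_closed Require Import complex.
From mathcomp.multinomials Require Import ssrcomplements mpoly.

Set Implicit Arguments.
Unset Strict Implicit.
Unset Printing Implicit Defensive.
Import GRing.Theory.

Section Ideal.
Local Open Scope ring_scope.
Variable P : comNzRingType.
Implicit Types (gs : seq P) (f g : P).

Lemma in_idealP gs g : in_ideal gs g <->
  exists h : nat -> P, g = \sum_(i < size gs) h i * gs`_i.
Proof.
split=> [[hs [_ ->]]|[h ->]]; first by exists (nth 0 hs).
exists (mkseq h (size gs)); rewrite size_mkseq; split=> //.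
by apply: eq_bigr => i _; rewrite nth_mkseq.
Qed.

Lemma in_ideal0 gs : in_ideal gs 0.
Proof.
by apply/in_idealP; exists (fun _ => 0); rewrite big1 // => i _; rewrite mul0r.
Qed.

Lemma in_idealD gs g1 g2 :
  in_ideal gs g1 -> in_ideal gs g2 -> in_ideal gs (g1 + g2).
Proof.
move=> /in_idealP[h1 ->] /in_idealP[h2 ->]; apply/in_idealP.
exists (fun i => h1 i + h2 i); rewrite -big_split; apply: eq_bigr => i _.
by rewrite mulrDl.
Qed.

Lemma in_idealMl gs f g : in_ideal gs g -> in_ideal gs (f * g).
Proof.
move=> /in_idealP[h ->]; apply/in_idealP; exists (fun i => f * h i).
by rewrite mulr_sumr; apply: eq_bigr => i _; rewrite mulrA.
Qed.

Lemma in_ideal_sum gs (I : finType) (F : I -> P) :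
  (forall i, in_ideal gs (F i)) -> in_ideal gs (\sum_i F i).
Proof.
by move=> gsF; apply: big_ind => //; [exact: in_ideal0 | exact: in_idealD].
Qed.

Lemma in_ideal_rcons gs f g :
  in_ideal (rcons gs f) g <-> exists r, in_ideal gs (g - r * f).
Proof.
split.
- move=> /in_idealP[h ->]; exists (h (size gs)); apply/in_idealP; exists h.
  rewrite size_rcons big_ord_recr /= nth_rcons ltnn eqxx addrK.
  by apply: eq_bigr => i _; rewrite nth_rcons ltn_ord.
- move=> [r /in_idealP[h E]]; apply/in_idealP.
  exists (fun i => if i == size gs then r else h i).
  rewrite size_rcons big_ord_recr /= nth_rcons ltnn !eqxx.
  rewrite -(subrK (r * f) g) E; congr (_ + _); apply: eq_bigr => i _.
  by rewrite nth_rcons ltn_ord (ltn_eqF (ltn_ord i)).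
Qed.

Definition nzdiv_mod gs f := forall g, in_ideal gs (f * g) -> in_ideal gs g.

Lemma regular_seq_rcons gs f : regular_seq (rcons gs f) <->
  [/\ forall j, (j < size gs)%N -> nzdiv_mod (take j gs) gs`_j,
      nzdiv_mod gs f & ~ in_ideal (rcons gs f) 1].
Proof.
have take_rcons j : (j <= size gs)%N -> take j (rcons gs f) = take j gs.
  by move=> le_j_gs; rewrite -cats1 takel_cat.
split=> [[reg unit_gsf]|[reg reg_f unit_gsf]]; split=> //.
- move=> j lt_j_gs; have := reg j.
  rewrite size_rcons ltnS (ltnW lt_j_gs) take_rcons ?(ltnW lt_j_gs) //.
  by rewrite nth_rcons lt_j_gs; apply.
- have := reg (size gs); rewrite size_rcons ltnSn take_rcons //.
  by rewrite take_size nth_rcons ltnn eqxx; apply.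
- move=> j; rewrite size_rcons ltnS leq_eqVlt => /orP[/eqP ->|lt_j_gs].
    by rewrite take_rcons // take_size nth_rcons ltnn eqxx.
  by rewrite take_rcons ?(ltnW lt_j_gs) // nth_rcons lt_j_gs; apply: reg.
Qed.

Lemma nzdiv_modX gs f k : nzdiv_mod gs f -> nzdiv_mod gs (f ^+ k).
Proof.
move=> reg_f; elim: k => [|k IHk] g; first by rewrite expr0 mul1r.
by rewrite exprS -mulrA => /reg_f /IHk.
Qed.

Lemma regular_seq_rconsX gs f k : (0 < k)%N ->
  regular_seq (rcons gs f) -> regular_seq (rcons gs (f ^+ k)).
Proof.
case: k => // k _ /regular_seq_rcons[reg reg_f unit_gsf].
apply/regular_seq_rcons; split=> //; first exact: nzdiv_modX.
move=> /in_ideal_rcons[r gs_1rf]; apply/unit_gsf/in_ideal_rcons.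
by exists (r * f ^+ k); rewrite -mulrA -exprSr.
Qed.

End Ideal.

(* [Q] is a free [P]-module via [phi], with basis [basis] and coordinates
   [coord]; [coord1] is what makes the base change faithful. *)
Section FreeBaseChange.
Local Open Scope ring_scope.
Variables (P Q : comNzRingType) (phi : {rmorphism P -> Q}) (I : finType).
Variables (coord : I -> {additive Q -> P}) (basis : I -> Q) (i1 : I).
Hypothesis coord_phiM : forall i u q, coord i (phi u * q) = u * coord i q.
Hypothesis coord_expansion : forall q, q = \sum_i basis i * phi (coord i q).
Hypothesis coord1 : coord i1 1 = 1.

Lemma in_ideal_map gs g : in_ideal gs g -> in_ideal (map phi gs) (phi g).
Proof.
move=> /in_idealP[h ->]; apply/in_idealP; exists (fun i => phi (h i)).
rewrite size_map rmorph_sum; apply: eq_bigr => i _.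
by rewrite rmorphM (nth_map 0).
Qed.

Lemma in_ideal_mapP gs q :
  in_ideal (map phi gs) q <-> forall i, in_ideal gs (coord i q).
Proof.
split=> [/in_idealP[h ->] i|gs_q].
  apply/in_idealP; exists (fun j => coord i (h j)).
  rewrite raddf_sum size_map; apply: eq_bigr => j _.
  by rewrite (nth_map 0) // mulrC coord_phiM mulrC.
rewrite (coord_expansion q); apply: in_ideal_sum => i.
by apply: in_idealMl; apply: in_ideal_map.
Qed.

Lemma regular_seq_map gs : regular_seq gs -> regular_seq (map phi gs).
Proof.
move=> [reg unit_gs]; split.
  move=> j; rewrite size_map => lt_j_gs g; rewrite -map_take (nth_map 0) //.
  move=> /in_ideal_mapP gs_g; apply/in_ideal_mapP => i.
  by apply: (reg j lt_j_gs); rewrite -coord_phiM.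
by move=> /in_ideal_mapP/(_ i1); rewrite coord1.
Qed.

End FreeBaseChange.

Section ExpSubstitution.
Local Open Scope ring_scope.
Variables (C : comNzRingType) (n k : nat).
Local Notation P := {mpoly C[n]}.
Implicit Types (p u : P) (m : 'X_{1..n}) (e : {ffun 'I_n -> 'I_k}).

Definition expX : n.-tuple P := [tuple 'X_i ^+ k | i < n].

Lemma comp_expX_mono m : 'X_[m] \mPo expX = 'X_[m *+ k].
Proof.
rewrite comp_mpolyX [RHS]mpolyXE_id; apply: eq_bigr => i _.
by rewrite tnth_mktuple -exprM mulmnE mulnC.
Qed.

Lemma comp_expX_sym p : p \is symmetric -> p \mPo expX \is symmetric.
Proof.
move=> p_sym; apply: msym_comp_poly => // s; apply/tuple_permP.
exists (s^-1)%g; apply: (congr1 val); apply: eq_from_tnth => i.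
rewrite !tnth_mktuple -tnth_nth tnth_mktuple rmorphXn /= msymX.
congr ('X_[_] ^+ _); apply/mnmP => j.
by rewrite !mnmE (inj_eq perm_inj).
Qed.

Lemma comp_expX_homog d p : p \is d.-homog -> p \mPo expX \is (k * d).-homog.
Proof.
move=> /dhomogP p_homog; rewrite comp_mpolyEX big_seq.
apply: rpred_sum => m m_p; rewrite comp_expX_mono.
by apply: rpredZ; rewrite dhomogX /= mdegMn p_homog // mulnC.
Qed.

Hypothesis k_gt0 : (0 < k)%N.

Definition mdivn m : 'X_{1..n} := [multinom (m i %/ k)%N | i < n].

Definition coordX e m : P :=
  if [forall i, (m i %% k)%N == e i] then 'X_[mdivn m] else 0.

(* [mcoord e p] is the coordinate of [p] on the basis monomial [X^e] of [C[X]],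
   viewed as a module over itself through [X |-> X^k]. *)
Definition mcoord e p : P := \sum_(m <- msupp p) p@_m *: coordX e m.

Lemma mcoordwE e p w : (msize p <= w)%N ->
  mcoord e p = \sum_(m : 'X_{1..n < w}) p@_m *: coordX e m.
Proof.
move=> le_p_w; pose I : subFinType _ := 'X_{1..n < w}.
rewrite /mcoord (big_mksub I) ?msupp_uniq //=; last first.
  by move=> m /msize_mdeg_lt /leq_trans; apply.
by rewrite big_rmcond //= => m /memN_msupp_eq0 ->; rewrite scale0r.
Qed.

Lemma mcoord_is_linear e : linear (mcoord e).
Proof.
move=> c p q /=; set w := maxn (msize p) (msize q).
have le_pw : (msize p <= w)%N by rewrite leq_maxl.
have le_qw : (msize q <= w)%N by rewrite leq_maxr.
have le_cpqw : (msize (c *: p + q) <= w)%N.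
  apply: leq_trans (mmeasureD_le _ _ _) _; rewrite geq_max le_qw andbT.
  exact: leq_trans (msizeZ_le _ _) le_pw.
rewrite !(mcoordwE e (w := w)) // scaler_sumr -big_split /=.
by apply: eq_bigr => m _; rewrite linearP /= scalerDl scalerA.
Qed.

HB.instance Definition _ e :=
  GRing.isLinear.Build C P P _ (mcoord e) (mcoord_is_linear e).

Lemma mcoordX e m : mcoord e 'X_[m] = coordX e m.
Proof. by rewrite /mcoord msuppX big_seq1 mcoeffX eqxx scale1r. Qed.

Lemma coordXD e m0 m : coordX e (m0 *+ k + m)%MM = 'X_[m0] * coordX e m.
Proof.
rewrite /coordX; have -> : [forall i, ((m0 *+ k + m)%MM i %% k)%N == e i] =
                           [forall i, (m i %% k)%N == e i].
  by apply: eq_forallb => i; rewrite mnmDE mulmnE modnMDl.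
case: ifP => _; last by rewrite mulr0.
rewrite -mpolyXD; congr 'X_[_]; apply/mnmP => i.
by rewrite mnmDE mnmE mnmDE mulmnE divnMDl // mnmE.
Qed.

Lemma mcoord_comp_expXM e u p : mcoord e ((u \mPo expX) * p) = u * mcoord e p.
Proof.
have mcoord_monoM m0 : mcoord e ('X_[m0 *+ k] * p) = 'X_[m0] * mcoord e p.
  elim/mpolyind: p => [|c m p _ _ IHp]; first by rewrite mulr0 raddf0 mulr0.
  rewrite mulrDr !raddfD /= IHp mulrDr; congr (_ + _).
  by rewrite -scalerAr -mpolyXD !linearZ /= !mcoordX coordXD scalerAr.
elim/mpolyind: u => [|c m u _ _ IHu]; first by rewrite rmorph0 !mul0r raddf0.
rewrite rmorphD /= !mulrDl raddfD /= IHu; congr (_ + _).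
by rewrite comp_mpolyZ comp_expX_mono -scalerAl linearZ /= mcoord_monoM scalerAl.
Qed.

Definition mnm_of_ffun e : 'X_{1..n} := [multinom (e i : nat) | i < n].

Lemma mcoord_expansion p :
  p = \sum_e 'X_[mnm_of_ffun e] * (mcoord e p \mPo expX).
Proof.
have monoE m : 'X_[m] = \sum_e 'X_[mnm_of_ffun e] * (coordX e m \mPo expX).
  pose em : {ffun 'I_n -> 'I_k} := [ffun i => Ordinal (ltn_pmod (m i) k_gt0)].
  have m_em : [forall i, (m i %% k)%N == em i].
    by apply/forallP => i; rewrite ffunE.
  rewrite (bigD1 em) //= big1 ?addr0 => [|e ne_e_em]; last first.
    rewrite /coordX; case: ifP => [/forallP m_e|_]; last by rewrite rmorph0 mulr0.
    case/eqP: ne_e_em; apply/ffunP => i; apply/val_inj.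
    by rewrite ffunE /=; apply/esym/eqP/m_e.
  rewrite /coordX m_em comp_expX_mono -mpolyXD; congr 'X_[_]; apply/mnmP => i.
  by rewrite mnmDE !mnmE mulmnE mnmE ffunE /= addnC -divn_eq.
elim/mpolyind: p => [|c m p _ _ IHp].
  by rewrite big1 // => e _; rewrite raddf0 rmorph0 mulr0.
under eq_bigr => e _ do rewrite raddfD rmorphD mulrDr /=.
rewrite big_split /= -IHp {1}(monoE m) scaler_sumr; congr (_ + _).
by apply: eq_bigr => e _; rewrite linearZ /= mcoordX comp_mpolyZ scalerAr.
Qed.

Lemma mcoord1 : mcoord [ffun => Ordinal k_gt0] 1 = 1.
Proof.
rewrite -mpolyX0 mcoordX /coordX.
have -> : [forall i, ((0%MM : 'X_{1..n}) i %% k)%N ==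
            ([ffun => Ordinal k_gt0] : {ffun 'I_n -> 'I_k}) i].
  by apply/forallP => i; rewrite ffunE mnmE mod0n.
by congr 'X_[_]; apply/mnmP => i; rewrite !mnmE div0n.
Qed.

Lemma regular_seq_comp_expX gs :
  regular_seq gs -> regular_seq (map (comp_mpoly expX) gs).
Proof.
exact: (regular_seq_map (coord := mcoord) mcoord_comp_expXM
                        mcoord_expansion mcoord1).
Qed.

End ExpSubstitution.

Lemma good_seq_comp_expX (R : realType) (N D k : nat)
    (f : {mpoly R[i][N.-1.+1]}) :
  map (comp_mpoly (expX _ _ k)) (good_seq D f) =
  good_seq (k * D) (f \mPo expX _ _ k).
Proof.
rewrite /good_seq map_rcons -map_comp; congr rcons; apply: eq_map => j /=.
rewrite rmorphB !rmorphXn /= !comp_mpolyXU -!tnth_nth !tnth_mktuple.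
by rewrite -!exprM.
Qed.

Theorem proposition3p25 (R : realType) (n d a k : nat) :
  (0 < n)%N -> (0 < d)%N -> (0 < a)%N -> (0 < k)%N ->
  good R n d a ->
  good R n d (k * a) /\ good R n (k * d) (k * a).
Proof.
move=> _ _ _ k_gt0 [f [f_sym f_homog f_reg]]; split.
- exists (f ^+ k)%R; split.
  + exact: rpredX.
  + by rewrite mulnC dhomogMn.
  + exact: regular_seq_rconsX.
- exists (f \mPo expX _ _ k); split.
  + exact: comp_expX_sym.
  + exact: comp_expX_homog.
  + by rewrite -good_seq_comp_expX; apply: regular_seq_comp_expX.
Qed.
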